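(* Let $H$ be a cancellative monoid and $r$ an ideal system on $H$ such that $(\mathcal I_r(H),\cdot_r)$ is unit-cancellative. Suppose there are a non-$r$-cancellation ideal $I\in\mathcal I_r(H)$, an atom $J_1$ of $\mathcal I_r(H)$, and an element $J_2\in\mathcal I_r(H)$ that is not an atom of $\mathcal I_r(H)$, such that $I\cdot_r J_1=I\cdot_r J_2$. Then $\mathcal I_r(H)$ is not a transfer Krull monoid.
   Context: Ideal system $r$ on a cancellative monoid $H$: a map $X\mapsto X_r$ on subsets of $H$ with $X\subseteq X_r$; $X\subseteq Y_r\Rightarrow X_r\subseteq Y_r$; $aH\subseteq\{a\}_r$; $aX_r=(aX)_r$. $\mathcal I_r(H)$ is the set of nonempty $r$-ideals ($I_r=I$) with $I\cdot_rJ=(IJ)_r$, a reduced semigroup with identity $H$. $I$ is an $r$-cancellation ideal if $I\cdot_rJ_1=I\cdot_rJ_2$ implies $J_1=J_2$. Monoids are commutative, unit-cancellative, with identity; an atom is a non-unit $u$ with $u=ab\Rightarrow a$ or $b$ a unit. A monoid homomorphism $\theta:H\to B$ is a transfer homomorphism if (T1) $B=\theta(H)B^\times$ and $\theta^{-1}(B^\times)=H^\times$, and (T2) whenever $\theta(u)=bc$ with $u\in H$, $b,c\in B$, there are $v,w\in H$ with $u=vw$, $\theta(v)\in bB^\times$, $\theta(w)\in cB^\times$. A Krull monoid is a cancellative monoid admitting a divisor homomorphism into a factorial monoid. A monoid is transfer Krull if it admits a transfer homomorphism to a Krull monoid. *)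

From Stdlib Require Import List FunctionalExtensionality PropExtensionality.

Section MonoidNotions.
Variables (T : Type) (mul : T -> T -> T) (one : T).

Definition is_comm_monoid : Prop :=
  (forall a b c, mul a (mul b c) = mul (mul a b) c) /\
  (forall a b, mul a b = mul b a) /\
  (forall a, mul one a = a).

Definition is_unit (u : T) : Prop := exists v, mul u v = one.

Definition divides (a b : T) : Prop := exists c, b = mul a c.

Definition cancellative : Prop := forall a b c, mul a b = mul a c -> b = c.

(* a = a u  (equivalently u a = a, the operation being commutative) implies u unit *)
Definition unit_cancellative : Prop :=
  forall a u, mul a u = a \/ mul u a = a -> is_unit u.

Definition is_atom (u : T) : Prop :=
  ~ is_unit u /\ forall a b, u = mul a b -> is_unit a \/ is_unit b.

Definition is_prime (p : T) : Prop :=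
  ~ is_unit p /\ forall a b, divides p (mul a b) -> divides p a \/ divides p b.

Definition factorial : Prop :=
  is_comm_monoid /\ cancellative /\
  forall a, ~ is_unit a ->
    exists l : list T, l <> nil /\ Forall is_prime l /\ a = fold_right mul one l.

End MonoidNotions.

Arguments is_comm_monoid {T}.
Arguments is_unit {T}.
Arguments divides {T}.
Arguments cancellative {T}.
Arguments unit_cancellative {T}.
Arguments is_atom {T}.
Arguments is_prime {T}.
Arguments factorial {T}.

Section Homs.
Variables (T1 : Type) (mul1 : T1 -> T1 -> T1) (one1 : T1).
Variables (T2 : Type) (mul2 : T2 -> T2 -> T2) (one2 : T2).

Definition monoid_hom (f : T1 -> T2) : Prop :=
  (forall a b, f (mul1 a b) = mul2 (f a) (f b)) /\ f one1 = one2.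

Definition divisor_hom (f : T1 -> T2) : Prop :=
  monoid_hom f /\ forall a b, divides mul2 (f a) (f b) -> divides mul1 a b.

Definition in_unit_coset (b x : T2) : Prop :=
  exists e, is_unit mul2 one2 e /\ x = mul2 b e.

Definition transfer_hom (theta : T1 -> T2) : Prop :=
  monoid_hom theta /\
  (forall b, exists u e, is_unit mul2 one2 e /\ b = mul2 (theta u) e) /\
  (forall u, is_unit mul2 one2 (theta u) <-> is_unit mul1 one1 u) /\
  (forall u b c, theta u = mul2 b c ->
     exists v w, u = mul1 v w /\ in_unit_coset b (theta v) /\ in_unit_coset c (theta w)).

End Homs.

Arguments monoid_hom {T1} mul1 one1 {T2} mul2 one2.
Arguments divisor_hom {T1} mul1 one1 {T2} mul2 one2.
Arguments in_unit_coset {T2} mul2 one2.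
Arguments transfer_hom {T1} mul1 one1 {T2} mul2 one2.

Definition Krull_monoid (B : Type) (mulB : B -> B -> B) (oneB : B) : Prop :=
  is_comm_monoid mulB oneB /\ cancellative mulB /\
  exists (F : Type) (mulF : F -> F -> F) (oneF : F) (f : B -> F),
    factorial mulF oneF /\ divisor_hom mulB oneB mulF oneF f.

Arguments Krull_monoid {B}.

Definition transfer_Krull (T : Type) (mul : T -> T -> T) (one : T) : Prop :=
  exists (B : Type) (mulB : B -> B -> B) (oneB : B) (theta : T -> B),
    Krull_monoid mulB oneB /\ transfer_hom mul one mulB oneB theta.

Arguments transfer_Krull {T}.

Record cmonoid := CMonoid {
  mcarrier :> Type;
  mmul : mcarrier -> mcarrier -> mcarrier;
  mone : mcarrier;
  mmulA : forall a b c, mmul a (mmul b c) = mmul (mmul a b) c;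
  mmulC : forall a b, mmul a b = mmul b a;
  mmul1 : forall a, mmul mone a = a
}.

Record ideal_system (H : cmonoid) := IdealSystem {
  rclos :> (H -> Prop) -> (H -> Prop);
  r_ext : forall X x, X x -> rclos X x;
  r_mono : forall X Y, (forall x, X x -> rclos Y x) -> forall x, rclos X x -> rclos Y x;
  r_princ : forall a b, rclos (fun y => y = a) (mmul H a b);
  r_mul : forall a X y,
    (exists x, rclos X x /\ y = mmul H a x) <->
    rclos (fun z => exists x, X x /\ z = mmul H a x) y
}.

Section Ideals.
Variables (H : cmonoid) (r : ideal_system H).

Record rideal := RIdeal {
  iset :> H -> Prop;
  iset_ne : exists x, iset x;
  iset_closed : r iset = iset
}.

Definition setmul (X Y : H -> Prop) : H -> Prop :=
  fun z => exists x y, X x /\ Y y /\ z = mmul H x y.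

Lemma r_idem (X : H -> Prop) : r (r X) = r X.
Proof.
  apply functional_extensionality; intro x; apply propositional_extensionality; split.
  - apply (r_mono _ r); auto.
  - apply (r_ext _ r).
Qed.

Lemma setmul_r_ne (I J : rideal) : exists x, r (setmul I J) x.
Proof.
  destruct (iset_ne I) as [a Ha]; destruct (iset_ne J) as [b Hb].
  exists (mmul H a b); apply (r_ext _ r); exists a, b; auto.
Qed.

Definition imul (I J : rideal) : rideal :=
  RIdeal (r (setmul I J)) (setmul_r_ne I J) (r_idem (setmul I J)).

Lemma r_full : r (fun _ => True) = (fun _ => True).
Proof.
  apply functional_extensionality; intro x; apply propositional_extensionality; split.
  - auto.
  - intros _; apply (r_ext _ r (fun _ => True)); exact I.
Qed.

Lemma full_ne : exists x : H, (fun _ : H => True) x.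
Proof. exists (mone H); exact I. Qed.

Definition ione : rideal := RIdeal (fun _ => True) full_ne r_full.

Definition r_cancellation_ideal (I : rideal) : Prop :=
  forall J1 J2 : rideal, imul I J1 = imul I J2 -> J1 = J2.

End Ideals.

Arguments rideal {H} r.
Arguments imul {H} r.
Arguments ione {H} r.
Arguments r_cancellation_ideal {H r}.

(** Suppose theta : I_r(H) -> B were a transfer homomorphism into a Krull
    monoid B.  Since B is cancellative and theta is multiplicative,
    theta(I) theta(J1) = theta(I) theta(J2) forces theta(J1) = theta(J2).
    The general facts established first are that a transfer homomorphism
    preserves atoms (by (T2) and the unit condition of (T1)) and reflects
    them (a factorization of u maps to a factorization of theta(u), and
    theta reflects units).  Hence theta(J1) is an atom of B, so is
    theta(J2), so J2 is an atom of I_r(H): a contradiction. *)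


Section TransferAtoms.
Variables (T : Type) (mul : T -> T -> T) (one : T).
Variables (B : Type) (mulB : B -> B -> B) (oneB : B).
Variable theta : T -> B.

Lemma hom_cancel_image (Hhom : monoid_hom mul one mulB oneB theta)
    (Hcan : cancellative mulB) (a b c : T) :
  mul a b = mul a c -> theta b = theta c.
Proof.
  intro Habc; destruct Hhom as [Hmul _].
  apply (Hcan (theta a)); rewrite <- !Hmul, Habc; reflexivity.
Qed.

Lemma unit_coset_unit
    (HassocB : forall a b c, mulB a (mulB b c) = mulB (mulB a b) c)
    (b x : B) :
  in_unit_coset mulB oneB b x -> is_unit mulB oneB x -> is_unit mulB oneB b.
Proof.
  intros [e [_ Hx]] [z Hz]; subst x.
  exists (mulB e z); rewrite HassocB; exact Hz.
Qed.

Hypothesis HassocB : forall a b c, mulB a (mulB b c) = mulB (mulB a b) c.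
Hypothesis Htr : transfer_hom mul one mulB oneB theta.

(** Transfer homomorphisms map atoms to atoms: a factorization of theta(u)
    lifts by (T2) to one of u, one of whose factors is a unit. *)
Lemma transfer_preserves_atom (u : T) :
  is_atom mul one u -> is_atom mulB oneB (theta u).
Proof.
  destruct Htr as [_ [_ [Hunit HT2]]].
  intros [Hnu Hfact]; split.
  - intro Hu; apply Hnu, Hunit, Hu.
  - intros x y Hxy.
    destruct (HT2 u x y Hxy) as [v [w [Hvw [Hcx Hcy]]]].
    destruct (Hfact v w Hvw) as [Hv | Hw].
    + left; apply (unit_coset_unit HassocB _ _ Hcx), Hunit, Hv.
    + right; apply (unit_coset_unit HassocB _ _ Hcy), Hunit, Hw.
Qed.

Lemma transfer_reflects_atom (u : T) :
  is_atom mulB oneB (theta u) -> is_atom mul one u.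
Proof.
  destruct Htr as [[Hmul _] [_ [Hunit _]]].
  intros [Hnu Hfact]; split.
  - intro Hu; apply Hnu, Hunit, Hu.
  - intros a b Hab.
    rewrite Hab, Hmul in Hfact.
    destruct (Hfact _ _ eq_refl) as [Ha | Hb].
    + left; apply Hunit, Ha.
    + right; apply Hunit, Hb.
Qed.

End TransferAtoms.

Lemma transfer_Krull_atom_cancel (T : Type) (mul : T -> T -> T) (one : T)
    (a u v : T) :
  transfer_Krull mul one -> mul a u = mul a v ->
  is_atom mul one u -> is_atom mul one v.
Proof.
  intros [B [mulB [oneB [theta [[[HassocB _] [Hcan _]] Htr]]]]] Hauv Hu.
  assert (Htheta : theta u = theta v)
    by exact (hom_cancel_image _ _ _ _ _ _ _ (proj1 Htr) Hcan _ _ _ Hauv).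
  apply (transfer_reflects_atom _ _ _ _ _ _ _ Htr).
  rewrite <- Htheta.
  exact (transfer_preserves_atom _ _ _ _ _ _ _ HassocB Htr _ Hu).
Qed.

Theorem lemma4p8 (H : cmonoid) (r : ideal_system H)
  (HcH : cancellative (mmul H))
  (Huc : unit_cancellative (imul r) (ione r))
  (I J1 J2 : rideal r)
  (hI : ~ r_cancellation_ideal I)
  (hJ1 : is_atom (imul r) (ione r) J1)
  (hJ2 : ~ is_atom (imul r) (ione r) J2)
  (heq : imul r I J1 = imul r I J2) :
  ~ transfer_Krull (imul r) (ione r).
Proof.
  intro Htk.
  exact (hJ2 (transfer_Krull_atom_cancel _ _ _ _ _ _ Htk heq hJ1)).
Qed.
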